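(* Let $\alpha(x)=a_1x^2+a_2x+a_3$ and $\beta(x)=b_1x^2+b_2x+b_3$ with $a_i,b_i\in\mathbb{R}$, $x\in\mathbb{R}$. Then the set $$V:=\{(\alpha(x),\beta(x)) : x\in\mathbb{R}\}+\mathbb{R}^2_+$$ is convex. *)

From Stdlib Require Import Reals.
Open Scope R_scope.

Definition convex2 (S : R * R -> Prop) : Prop :=
  forall (u v : R * R) (t : R), S u -> S v -> 0 <= t <= 1 ->
    S (t * fst u + (1 - t) * fst v, t * snd u + (1 - t) * snd v).

Definition plus_orthant (A : R * R -> Prop) : R * R -> Prop :=
  fun p => exists a d : R * R, A a /\ 0 <= fst d /\ 0 <= snd d /\
             p = (fst a + fst d, snd a + snd d).

(* The convex combination of two points of the curve is dominated, coordinatewise,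
   by some point of the curve.  If one coordinate, say alpha, is a convex quadratic,
   then alpha at the convex combination w of x and y lies below the chord, so the
   level set of alpha at chord height is an interval around w; since
   a1 beta - b1 alpha is affine, one of its two endpoints also keeps beta below the
   chord.  If both leading coefficients are nonpositive and one is negative, there
   is a direction along which each coordinate either tends to -oo or is constant.
   If both are zero, the curve is affine and w itself works. *)

From Stdlib Require Import Reals Lra Psatz.
Open Scope R_scope.

Definition quad (c1 c2 c3 z : R) : R := c1 * z ^ 2 + c2 * z + c3.

Definition chord (f : R -> R) (x y t : R) : R := t * f x + (1 - t) * f y.

Lemma chord_quad (c1 c2 c3 x y t : R) :
  chord (quad c1 c2 c3) x y t
  = quad c1 c2 c3 (t * x + (1 - t) * y) + c1 * (t * (1 - t) * (x - y) ^ 2).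
Proof. unfold chord, quad; ring. Qed.

Lemma quad_opp (c1 c2 c3 z : R) : quad c1 c2 c3 (- z) = quad c1 (- c2) c3 z.
Proof. unfold quad; ring. Qed.

Lemma quad_level_le (c1 c2 c3 w M : R) :
  0 < c1 -> quad c1 c2 c3 w <= M -> exists z, z <= w /\ quad c1 c2 c3 z = M.
Proof.
  intros Hc1 Hw.
  set (D := c2 ^ 2 - 4 * c1 * (c3 - M)).
  assert (HD : D = (2 * c1 * w + c2) ^ 2 + 4 * c1 * (M - quad c1 c2 c3 w))
    by (unfold D, quad; ring).
  assert (HD0 : 0 <= D).
  { rewrite HD.
    assert (0 <= (2 * c1 * w + c2) ^ 2) by apply pow2_ge_0.
    assert (0 <= 4 * c1 * (M - quad c1 c2 c3 w)) by (apply Rmult_le_pos; lra).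
    lra. }
  set (S := sqrt D).
  assert (HS2 : S * S = D) by (apply sqrt_sqrt; lra).
  assert (HS0 : 0 <= S) by apply sqrt_pos.
  assert (HSw : - S <= 2 * c1 * w + c2) by nra.
  exists ((- c2 - S) / (2 * c1)).
  assert (Hz : 2 * c1 * ((- c2 - S) / (2 * c1)) + c2 = - S) by (field; lra).
  split; [nra |].
  apply (Rmult_eq_reg_l (4 * c1)); [| lra].
  unfold quad in *; unfold D in HS2; nra.
Qed.

Lemma quad_level_ge (c1 c2 c3 w M : R) :
  0 < c1 -> quad c1 c2 c3 w <= M -> exists z, w <= z /\ quad c1 c2 c3 z = M.
Proof.
  intros Hc1 Hw.
  rewrite <- (Ropp_involutive w), quad_opp in Hw.
  destruct (quad_level_le c1 (- c2) c3 (- w) M Hc1 Hw) as [z [Hzw Hz]].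
  exists (- z); split; [lra |].
  now rewrite quad_opp.
Qed.

Lemma convex_quad_chord_dominated (a1 a2 a3 b1 b2 b3 x y t : R) :
  0 < a1 -> 0 <= t <= 1 ->
  exists z, quad a1 a2 a3 z <= chord (quad a1 a2 a3) x y t
         /\ quad b1 b2 b3 z <= chord (quad b1 b2 b3) x y t.
Proof.
  intros Ha1 Ht.
  set (w := t * x + (1 - t) * y).
  set (Ma := chord (quad a1 a2 a3) x y t).
  set (Mb := chord (quad b1 b2 b3) x y t).
  set (c := a1 * b2 - b1 * a2).
  assert (Hw : quad a1 a2 a3 w <= Ma).
  { unfold Ma; rewrite chord_quad.
    assert (0 <= t * (1 - t) * (x - y) ^ 2)
      by (apply Rmult_le_pos; [nra | apply pow2_ge_0]).
    assert (0 <= a1 * (t * (1 - t) * (x - y) ^ 2)) by (apply Rmult_le_pos; lra).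
    fold w; lra. }
  (* [a1 * quad b - b1 * quad a] is affine with slope [c], so it commutes with chords. *)
  assert (Hlin : forall z, a1 * quad b1 b2 b3 z - b1 * quad a1 a2 a3 z
                           = c * z + (a1 * b3 - b1 * a3))
    by (intro; unfold quad, c; ring).
  assert (Hlin_chord : a1 * Mb - b1 * Ma = c * w + (a1 * b3 - b1 * a3))
    by (unfold Ma, Mb, chord, quad, c, w; ring).
  assert (Hlevel : exists z, quad a1 a2 a3 z = Ma /\ c * z <= c * w).
  { destruct (Rle_or_lt 0 c) as [Hc | Hc].
    - destruct (quad_level_le a1 a2 a3 w Ma Ha1 Hw) as [z [Hzw Hz]].
      exists z; split; [exact Hz | nra].
    - destruct (quad_level_ge a1 a2 a3 w Ma Ha1 Hw) as [z [Hzw Hz]].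
      exists z; split; [exact Hz | nra]. }
  destruct Hlevel as [z [Hza Hzc]].
  exists z; split; [lra |].
  pose proof (Hlin z).
  apply (Rmult_le_reg_l a1); [exact Ha1 | nra].
Qed.

Definition eventually_below (f : R -> R) (M : R) : Prop :=
  exists Z, forall z, Z <= z -> f z <= M.

Lemma eventually_below_mono (f g : R -> R) (K M : R) :
  (forall z, K <= z -> f z <= g z) -> eventually_below g M -> eventually_below f M.
Proof.
  intros Hfg [Z HZ].
  exists (Rmax K Z); intros z Hz.
  apply Rle_trans with (g z).
  - apply Hfg, Rle_trans with (Rmax K Z); [apply Rmax_l | exact Hz].
  - apply HZ, Rle_trans with (Rmax K Z); [apply Rmax_r | exact Hz].
Qed.

Lemma eventually_below_both (f g : R -> R) (M N : R) :
  eventually_below f M -> eventually_below g N -> exists z, f z <= M /\ g z <= N.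
Proof.
  intros [Z1 H1] [Z2 H2].
  exists (Rmax Z1 Z2); split; [apply H1, Rmax_l | apply H2, Rmax_r].
Qed.

Lemma linear_eventually_below (s d M : R) :
  s < 0 -> eventually_below (fun z => s * z + d) M.
Proof.
  intros Hs.
  exists ((M - d) / s); intros z Hz.
  assert (s * z <= s * ((M - d) / s)) by (apply Rmult_le_compat_neg_l; lra).
  assert (s * ((M - d) / s) = M - d) by (field; lra).
  lra.
Qed.

Lemma quad_eventually_below (c1 c2 c3 M : R) :
  c1 <= 0 -> c1 < 0 \/ c2 < 0 \/ (c2 = 0 /\ c3 <= M) ->
  eventually_below (quad c1 c2 c3) M.
Proof.
  intros Hc1 Hdir.
  assert (Hslope : c1 < 0 \/ c2 < 0 ->
                   exists K, 0 <= K /\ c1 * K + c2 < 0).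
  { intros [Hneg | Hneg].
    - exists ((Rabs c2 + 1) / - c1).
      assert (0 <= Rabs c2) by apply Rabs_pos.
      assert (c2 <= Rabs c2) by apply Rle_abs.
      assert (c1 * ((Rabs c2 + 1) / - c1) = - (Rabs c2 + 1)) by (field; lra).
      split; [apply Rmult_le_pos; [lra | left; apply Rinv_0_lt_compat; lra] | lra].
    - exists 0; lra. }
  destruct Hdir as [Hdir | [Hdir | [Hc2 Hc3]]].
  3: exists 0; intros z _; unfold quad; subst c2; nra.
  all: destruct Hslope as [K [HK HKs]]; [tauto |].
  (* beyond [K], [c1 z^2 <= c1 K z], so [quad] lies below a line of negative slope *)
  all: apply eventually_below_mono with (K := K) (g := fun z => (c1 * K + c2) * z + c3);
       [ intros z Hz; unfold quad;
         assert (0 <= z * (z - K)) by (apply Rmult_le_pos; lra); nra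
       | now apply linear_eventually_below ].
Qed.

Lemma concave_quad_dominated (a1 a2 a3 b1 b2 b3 Ma Mb : R) :
  a1 < 0 -> b1 <= 0 -> (b1 = 0 -> b2 = 0 -> b3 <= Mb) ->
  exists z, quad a1 a2 a3 z <= Ma /\ quad b1 b2 b3 z <= Mb.
Proof.
  intros Ha1 Hb1 Hconst.
  destruct (Rlt_or_le 0 b2) as [Hb2 | Hb2].
  - assert (Hleft : exists z, quad a1 (- a2) a3 z <= Ma /\ quad b1 (- b2) b3 z <= Mb).
    { apply eventually_below_both; apply quad_eventually_below; lra. }
    destruct Hleft as [z Hz].
    exists (- z); rewrite !quad_opp; exact Hz.
  - apply eventually_below_both; apply quad_eventually_below; lra.
Qed.

Lemma quad_pair_chord_dominated (a1 a2 a3 b1 b2 b3 x y t : R) :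
  0 <= t <= 1 ->
  exists z, quad a1 a2 a3 z <= chord (quad a1 a2 a3) x y t
         /\ quad b1 b2 b3 z <= chord (quad b1 b2 b3) x y t.
Proof.
  intros Ht.
  assert (Hconst : forall c1 c2 c3, c1 = 0 -> c2 = 0 ->
                     c3 <= chord (quad c1 c2 c3) x y t)
    by (intros c1 c2 c3 -> ->; unfold chord, quad; lra).
  destruct (Rlt_or_le 0 a1) as [Ha1 | Ha1].
  { now apply convex_quad_chord_dominated. }
  destruct (Rlt_or_le 0 b1) as [Hb1 | Hb1].
  { destruct (convex_quad_chord_dominated b1 b2 b3 a1 a2 a3 x y t Hb1 Ht) as [z Hz].
    now exists z. }
  destruct (Rlt_or_le a1 0) as [Ha1' | Ha1'].
  { apply concave_quad_dominated; [exact Ha1' | exact Hb1 | apply Hconst]. }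
  destruct (Rlt_or_le b1 0) as [Hb1' | Hb1'].
  { destruct (concave_quad_dominated b1 b2 b3 a1 a2 a3
                (chord (quad b1 b2 b3) x y t) (chord (quad a1 a2 a3) x y t))
      as [z Hz]; [exact Hb1' | exact Ha1 | apply Hconst | now exists z]. }
  replace a1 with 0 by lra; replace b1 with 0 by lra.
  exists (t * x + (1 - t) * y).
  rewrite !chord_quad; lra.
Qed.

Lemma convex2_plus_orthant (A : R * R -> Prop) :
  (forall u v t, A u -> A v -> 0 <= t <= 1 ->
     exists a, A a /\ fst a <= t * fst u + (1 - t) * fst v
                  /\ snd a <= t * snd u + (1 - t) * snd v) ->
  convex2 (plus_orthant A).
Proof.
  intros Hdom u v t [a [d [Ha [Hd1 [Hd2 ->]]]]] [b [e [Hb [He1 [He2 ->]]]]] Ht.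
  destruct (Hdom a b t Ha Hb Ht) as [c [Hc [Hc1 Hc2]]].
  exists c.
  exists (t * (fst a + fst d) + (1 - t) * (fst b + fst e) - fst c,
          t * (snd a + snd d) + (1 - t) * (snd b + snd e) - snd c).
  simpl; repeat split; [exact Hc | nra | nra | f_equal; ring].
Qed.

Theorem proposition4p2 (a1 a2 a3 b1 b2 b3 : R) :
  let alpha := fun x : R => a1 * x ^ 2 + a2 * x + a3 in
  let beta := fun x : R => b1 * x ^ 2 + b2 * x + b3 in
  convex2 (plus_orthant (fun p : R * R => exists x : R, p = (alpha x, beta x))).
Proof.
  intros alpha beta.
  apply convex2_plus_orthant.
  intros u v t [x ->] [y ->] Ht.
  destruct (quad_pair_chord_dominated a1 a2 a3 b1 b2 b3 x y t Ht) as [z [Hza Hzb]].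
  exists (alpha z, beta z); split; [now exists z |].
  exact (conj Hza Hzb).
Qed.
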